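(* Let $T$ be a complete dependent (NIP) first-order theory with monster model $\mathfrak{C}$, $\zeta$ an ordinal, $n_* <\omega$, and for $n<n_*$ let $\varphi_n(\bar x_{[\zeta]},\bar y_n)$ be a formula. Let $\mathcal{D}$ be a proper filter on a set $I$ and $\bar a_t \in {}^\zeta\mathfrak{C}$ for $t\in I$. Then there are $k_*<\omega$ and a partition $\langle \mathcal{S}_k : k<k_*\rangle$ of $I$ such that: (a) $\mathcal{S}_k \in \mathcal{D}^+$ for each $k<k_*$; (b) for every $\ell<n_*$ and every $\bar b \in {}^{\ell g(\bar y_\ell)}\mathfrak{C}$ there are $k<k_*$ and a truth value $\mathbf t$ such that $\{t\in\mathcal{S}_k : \mathfrak{C}\models \varphi_\ell[\bar a_t,\bar b]^{\mathbf t}\} = \mathcal{S}_k \bmod \mathcal{D}$.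
   Context: $\bar x_{[\zeta]} = \langle x_i : i<\zeta\rangle$ (a formula uses only finitely many of these variables). $\mathcal{D}^+$ is the set of subsets of $I$ meeting every member of $\mathcal{D}$. For $X, Y \subseteq I$, ''$X = Y \bmod \mathcal{D}$'' means the symmetric difference of $X$ and $Y$ is disjoint from some member of $\mathcal{D}$. $\varphi^{\mathbf t}$ is $\varphi$ if $\mathbf t$ is true and $\neg\varphi$ otherwise. *)

From mathcomp Require Import all_boot.
Set Implicit Arguments. Unset Strict Implicit. Unset Printing Implicit Defensive.

Record signature := Signature {
  func : Type; farity : func -> nat;
  rel : Type; rarity : rel -> nat }.

Inductive term (L : signature) (V : Type) : Type :=
| tvar : V -> term L V
| tapp : forall f : func L, ('I_(farity f) -> term L V) -> term L V.

(** Formulas with free variables in [V]; [fex] binds a fresh variable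
    ([None]) and the old variables become [Some v]. *)
Inductive formula (L : signature) : Type -> Type :=
| feq : forall V, term L V -> term L V -> formula L V
| frel : forall V (r : rel L), ('I_(rarity r) -> term L V) -> formula L V
| fneg : forall V, formula L V -> formula L V
| fand : forall V, formula L V -> formula L V -> formula L V
| fex : forall V, formula L (option V) -> formula L V.

Record structure (L : signature) := Structure {
  dom :> Type;
  funi : forall f : func L, ('I_(farity f) -> dom) -> dom;
  reli : forall r : rel L, ('I_(rarity r) -> dom) -> Prop }.

Fixpoint teval (L : signature) (M : structure L) (V : Type) (e : V -> M)
  (t : term L V) : M :=
  match t with
  | tvar v => e v
  | tapp f args => funi (fun i => teval e (args i))
  end.

Definition extend (M : Type) (V : Type) (e : V -> M) (m : M) : option V -> M :=
  fun o => match o with Some v => e v | None => m end.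

Fixpoint sat (L : signature) (M : structure L) (V : Type) (phi : formula L V)
  : (V -> M) -> Prop :=
  match phi in formula _ V0 return (V0 -> M) -> Prop with
  | feq _ t1 t2 => fun e => teval e t1 = teval e t2
  | frel _ r args => fun e => reli (fun i => teval e (args i))
  | fneg _ p => fun e => ~ sat p e
  | fand _ p q => fun e => sat p e /\ sat q e
  | fex _ p => fun e => exists m : M, sat p (extend e m)
  end.

Definition join (M A B : Type) (a : A -> M) (b : B -> M) : A + B -> M :=
  fun s => match s with inl x => a x | inr y => b y end.

(** The partitioned formula phi(x;y) (|x| = p, |y| = q) has the independence
    property in (the complete theory of) M: for every n there are
    a_0..a_{n-1} and b_w (w ⊆ n) with  M |= phi[a_i, b_w]  iff  i ∈ w.
    (For each n this is a first-order sentence, so it holds in M iff it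
    holds in any/every model of Th(M).) *)
Definition has_IP (L : signature) (M : structure L) (p q : nat)
  (phi : formula L ('I_p + 'I_q)) : Prop :=
  forall n : nat, exists (a : 'I_n -> 'I_p -> M) (b : {set 'I_n} -> 'I_q -> M),
    forall (i : 'I_n) (w : {set 'I_n}), sat phi (join (a i) (b w)) <-> i \in w.

Definition dependent (L : signature) (M : structure L) : Prop :=
  forall (p q : nat) (phi : formula L ('I_p + 'I_q)), ~ has_IP M phi.

Definition proper_filter (I : Type) (D : (I -> Prop) -> Prop) : Prop :=
  [/\ D (fun _ => True),
      (forall X Y : I -> Prop, D X -> (forall t, X t -> Y t) -> D Y),
      (forall X Y : I -> Prop, D X -> D Y -> D (fun t => X t /\ Y t))
    & ~ D (fun _ => False)].

Definition positive (I : Type) (D : (I -> Prop) -> Prop) (X : I -> Prop) : Prop :=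
  forall Y, D Y -> exists t, X t /\ Y t.

Definition eq_mod (I : Type) (D : (I -> Prop) -> Prop) (X Y : I -> Prop) : Prop :=
  exists Z, D Z /\ forall t, Z t -> (X t <-> Y t).

Definition is_partition (I : Type) (kstar : nat) (S : 'I_kstar -> I -> Prop) : Prop :=
  (forall t, exists k, S k t) /\
  (forall k k' t, S k t -> S k' t -> k = k').

From Pilot Require Import Defs.
From mathcomp Require Import all_boot.
From Stdlib Require Import Classical ClassicalEpsilon FunctionalExtensionality.
From Stdlib Require List.
Set Implicit Arguments. Unset Strict Implicit. Unset Printing Implicit Defensive.

(** Call a pair (l, b) a test, holding at t iff φ_l[a_t, b].  If no such
    partition exists, the cells (Boolean atoms) of any family of tests with
    all cells D-positive form a positive partition, so some test splits
    every cell into two D-positive halves and can be added to the family.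
    This gives arbitrarily large such families, hence by pigeonhole large
    ones using a single φ_l; a point a_t in each cell then yields an
    independence pattern for φ_l with its variable blocks swapped.  After
    compressing the x-block to its finitely many free variables, dependence
    bounds the size of such patterns: contradiction. *)

Section Syntax.

Variable L : signature.

Fixpoint trename V W (f : V -> W) (t : term L V) : term L W :=
  match t with
  | tvar v => tvar L (f v)
  | tapp g args => tapp (fun i => trename f (args i))
  end.

Fixpoint frename V (phi : formula L V) {struct phi}
  : forall W, (V -> W) -> formula L W :=
  match phi in formula _ V0 return forall W, (V0 -> W) -> formula L W with
  | feq _ t1 t2 => fun W f => feq (trename f t1) (trename f t2)
  | Defs.frel _ r args => fun W f => @Defs.frel L W r (fun i => trename f (args i))
  | fneg _ p => fun W f => fneg (frename p f)
  | fand _ p q => fun W f => fand (frename p f) (frename q f)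
  | fex _ p => fun W f => fex (frename p (omap f))
  end.

Lemma teval_rename (M : structure L) V W (f : V -> W) (e : W -> M) t :
  teval e (trename f t) = teval (e \o f) t.
Proof.
elim: t => [//|g args IH] /=.
by congr funi; apply: functional_extensionality => i; apply: IH.
Qed.

Lemma sat_rename (M : structure L) V (phi : formula L V) :
  forall W (f : V -> W) (e : W -> M),
  sat (frename phi f) e <-> sat phi (e \o f).
Proof.
elim: phi => {V} [V t1 t2|V r args|V p IH|V p IHp q IHq|V p IH] W f e /=.
- by rewrite !teval_rename.
- have -> : (fun i => teval e (trename f (args i))) = (fun i => teval (e \o f) (args i))
    by apply: functional_extensionality => i; rewrite teval_rename.
  by [].
- by rewrite IH.
- by rewrite IHp IHq.
- have ext_omap m : extend e m \o omap f = extend (e \o f) m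
    by apply: functional_extensionality => -[v|].
  by split=> -[m Hm]; exists m; move: Hm; rewrite IH ext_omap.
Qed.

Fixpoint tvars V (t : term L V) : list V :=
  match t with
  | tvar v => [:: v]
  | tapp g args => List.flat_map (fun i => tvars (args i)) (enum 'I_(farity g))
  end.

Fixpoint fv V (phi : formula L V) : list V :=
  match phi in formula _ V0 return list V0 with
  | feq _ t1 t2 => tvars t1 ++ tvars t2
  | Defs.frel _ r args => List.flat_map (fun i => tvars (args i)) (enum 'I_(rarity r))
  | fneg _ p => fv p
  | fand _ p q => fv p ++ fv q
  | fex _ p => List.flat_map (fun o => if o is Some v then [:: v] else [::]) (fv p)
  end.

Lemma In_enum n (i : 'I_n) : List.In i (enum 'I_n).
Proof.
have : i \in enum 'I_n by rewrite mem_enum.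
elim: (enum 'I_n) => [//|x s IH] /=.
by rewrite in_cons => /orP [/eqP ->|/IH]; [left | right].
Qed.

Lemma teval_ext (M : structure L) V (t : term L V) (e1 e2 : V -> M) :
  (forall v, List.In v (tvars t) -> e1 v = e2 v) -> teval e1 t = teval e2 t.
Proof.
elim: t => [v|g args IH] /= agree; first by apply: agree; left.
congr funi; apply: functional_extensionality => i; apply: IH => v hv.
by apply: agree; apply/List.in_flat_map; exists i; split; [apply: In_enum|].
Qed.

Lemma sat_ext (M : structure L) V (phi : formula L V) :
  forall e1 e2 : V -> M,
  (forall v, List.In v (fv phi) -> e1 v = e2 v) -> (sat phi e1 <-> sat phi e2).
Proof.
elim: phi => {V} [V t1 t2|V r args|V p IH|V p IHp q IHq|V p IH] e1 e2 /= agree.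
- by rewrite (teval_ext (t := t1) (e2 := e2)) ?(teval_ext (t := t2) (e2 := e2)) //
    => v hv; apply: agree; apply: List.in_or_app; [right|left].
- have -> : (fun i => teval e1 (args i)) = (fun i => teval e2 (args i)) => //.
  apply: functional_extensionality => i; apply: teval_ext => v hv; apply: agree.
  by apply/List.in_flat_map; exists i; split; [apply: In_enum|].
- by rewrite (IH e1 e2).
- by rewrite (IHp e1 e2) ?(IHq e1 e2) // => v hv; apply: agree;
    apply: List.in_or_app; [right|left].
- have agree_ext m : forall v, List.In v (fv p) -> extend e1 m v = extend e2 m v.
    move=> [v|] hv //=; apply: agree.
    by apply/List.in_flat_map; exists (Some v); split; [|left].
  by split=> -[m Hm]; exists m; move: Hm; rewrite (IH _ _ (agree_ext m)).
Qed.

End Syntax.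

(** Position of [v] in [s] (classically decided), [size s] if absent. *)
Fixpoint cindex V (s : list V) (v : V) : nat :=
  if s is y :: s' then
    if excluded_middle_informative (v = y) then 0 else (cindex s' v).+1
  else 0.

Lemma cindex_le V (s : list V) v : cindex s v <= size s.
Proof. by elim: s => [|y s IH] //=; case: excluded_middle_informative. Qed.

Lemma nth_cindex V T (d : T) (h : V -> T) (s : list V) v :
  List.In v s -> nth d (map h s) (cindex s v) = h v.
Proof.
elim: s => [//|y s IH] /= Hin.
case: excluded_middle_informative => [eq_vy|ne] /=; first by rewrite eq_vy.
by apply: IH; case: Hin => // eq_yv; case: ne.
Qed.

Lemma finite_code V T (d : T) (s : list V) :
  exists k (f : V -> 'I_k) (code : (V -> T) -> 'I_k -> T),
    forall c v, List.In v s -> code c (f v) = c v.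
Proof.
exists (size s).+1, (fun v => inord (cindex s v)), (fun c i => nth d (map c s) i).
by move=> c v hv; rewrite inordK ?ltnS ?cindex_le // nth_cindex.
Qed.

Definition ip_pattern (L : signature) (M : structure L) Z q
  (phi : formula L (Z + 'I_q)) n (b : 'I_n -> 'I_q -> M)
  (c : {set 'I_n} -> Z -> M) : Prop :=
  forall i w, sat phi (join (c w) (b i)) <-> i \in w.

(** In a dependent structure such patterns have bounded size; this is
    dependence of the formula obtained by swapping the variable blocks and
    compressing the x-block to its finitely many free variables. *)
Lemma dependent_ip_bound (L : signature) (M : structure L)
  (hne : inhabited (dom M)) (hdep : dependent M) Z q (phi : formula L (Z + 'I_q)) :
  exists n, forall b c, ~ @ip_pattern L M Z q phi n b c.
Proof.
case: hne => m0.
have [k [f [code Hcode]]] := finite_code m0 (fv phi).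
pose swap (v : Z + 'I_q) : 'I_q + 'I_k :=
  match v with inl z => inr (f (inl z)) | inr j => inl j end.
apply: NNPP => unbounded; apply: (hdep q k (frename phi swap)) => n.
have [b [c hbc]] : exists b c, @ip_pattern L M Z q phi n b c.
  apply: NNPP => none; apply: unbounded; exists n => b c hbc.
  by apply: none; exists b, c.
exists b, (fun w => code (join (c w) (fun _ => m0))) => i w.
rewrite sat_rename -(hbc i w); apply: sat_ext => -[z|j] hz //=.
by rewrite Hcode.
Qed.

Section Filter.

Variables (I : Type) (D : (I -> Prop) -> Prop).
Hypothesis hD : proper_filter D.

Lemma positive_mono (X Y : I -> Prop) :
  (forall t, X t -> Y t) -> positive D X -> positive D Y.
Proof. by move=> XY hX Z hZ; have [t [/XY ? ?]] := hX Z hZ; exists t. Qed.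

Lemma positive_nonempty (X : I -> Prop) : positive D X -> exists t, X t.
Proof. by case: hD => hT _ _ _ /(_ _ hT) [t [? _]]; exists t. Qed.

Lemma positive_full : positive D (fun _ => True).
Proof.
case: hD => _ hup _ hF Y hY; apply: NNPP => none; apply: hF.
by apply: (hup _ _ hY) => t ht; apply: none; exists t.
Qed.

Lemma not_positive (X : I -> Prop) :
  ~ positive D X -> exists Y, D Y /\ forall t, Y t -> ~ X t.
Proof.
move=> npos; apply: NNPP => none; apply: npos => Y hY.
apply: NNPP => disj; apply: none; exists Y; split=> // t hYt hXt.
by apply: disj; exists t.
Qed.

Definition decides (X P : I -> Prop) : Prop :=
  exists tv : bool, eq_mod D (fun t => X t /\ (if tv then P t else ~ P t)) X.

Lemma undecided_split (X P : I -> Prop) :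
  ~ decides X P ->
  positive D (fun t => X t /\ P t) /\ positive D (fun t => X t /\ ~ P t).
Proof.
move=> undec; split; apply: NNPP => /not_positive [Y [hY disj]]; apply: undec.
- exists false, Y; split=> // t /disj XP; split=> [[] //|Xt].
  by split=> // Pt; apply: XP.
- exists true, Y; split=> // t /disj XnP; split=> [[] //|Xt].
  by split=> //; apply: NNPP => nPt; apply: XnP.
Qed.

End Filter.

Section Cells.

Variables (I : Type) (D : (I -> Prop) -> Prop).
Hypothesis hD : proper_filter D.
Variables (Test : Type) (holds : Test -> I -> Prop).

Definition cell m (A : 'I_m -> Test) (w : {set 'I_m}) : I -> Prop :=
  fun t => forall i, i \in w <-> holds (A i) t.

Definition independent m (A : 'I_m -> Test) : Prop :=
  forall w, positive D (cell A w).

Definition good_partition : Prop :=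
  exists kstar (S : 'I_kstar -> I -> Prop),
    [/\ is_partition S, forall k, positive D (S k)
      & forall x, exists k, decides D (S k) (holds x)].

Definition truth (P : Prop) : bool :=
  if excluded_middle_informative P then true else false.

Lemma truthP (P : Prop) : truth P <-> P.
Proof. by rewrite /truth; case: excluded_middle_informative. Qed.

Lemma cell_partition m (A : 'I_m -> Test) :
  is_partition (fun k : 'I_#|{: {set 'I_m}}| => cell A (enum_val k)).
Proof.
split=> [t|k k' t hk hk'].
- exists (enum_rank [set i | truth (holds (A i) t)]).
  by rewrite /cell enum_rankK => i; rewrite inE truthP.
- apply: enum_val_inj; apply/setP => i.
  by apply/idP/idP => [/hk /hk'|/hk' /hk].
Qed.

Definition snoc m (A : 'I_m -> Test) (x : Test) (i : 'I_m.+1) : Test :=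
  if unlift ord_max i is Some j then A j else x.

Lemma cell_snoc m (A : 'I_m -> Test) x (w : {set 'I_m.+1}) t :
  cell (snoc A x) w t <->
  cell A [set j | lift ord_max j \in w] t /\ (ord_max \in w <-> holds x t).
Proof.
rewrite /cell /snoc; split=> [h|[h1 h2] i].
- split=> [j|]; last by have := h ord_max; rewrite unlift_none.
  by rewrite inE; have := h (lift ord_max j); rewrite liftK.
- by case: (unliftP ord_max i) => [j|] ->; rewrite ?liftK -?h1 ?inE ?unlift_none.
Qed.

Lemma independent_snoc m (A : 'I_m -> Test) x :
  (forall w, positive D (fun t => cell A w t /\ holds x t) /\
             positive D (fun t => cell A w t /\ ~ holds x t)) ->
  independent (snoc A x).
Proof.
move=> split_cells w; have [pos_in pos_out] := split_cells [set j | lift ord_max j \in w].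
case: (boolP (ord_max \in w)) => [wx|nwx].
- by apply: positive_mono pos_in => t [hA hx]; apply/cell_snoc; split=> //; split.
- apply: positive_mono pos_out => t [hA hx]; apply/cell_snoc; split=> //.
  by split=> // /(negP nwx).
Qed.

(** If no good partition exists, there are independent families of every
    size: the cells of an independent family form a positive partition,
    so some test splits all of them. *)
Lemma independent_of_no_good_partition :
  ~ good_partition -> forall m, exists A : 'I_m -> Test, independent A.
Proof.
move=> nogood; elim=> [|m [A indA]].
  have empty_family : 'I_0 -> Test by case.
  exists empty_family => w.
  by apply: positive_mono (positive_full hD) => t _ [].
pose S (k : 'I_#|{: {set 'I_m}}|) := cell A (enum_val k).
have [x splits_all] : exists x, forall k, ~ decides D (S k) (holds x).
  apply: NNPP => none; apply: nogood; exists _, S; split.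
  - exact: cell_partition.
  - by move=> k; apply: indA.
  - move=> x; apply: NNPP => undec; apply: none; exists x => k dec.
    by apply: undec; exists k.
exists (snoc A x); apply: independent_snoc => w.
by have := undecided_split (splits_all (enum_rank w)); rewrite /S enum_rankK.
Qed.

(** Subfamilies of independent families are independent: each cell of the
    subfamily contains a cell of the whole family. *)
Lemma independent_restrict m n (A : 'I_m -> Test) (g : 'I_n -> 'I_m) :
  injective g -> independent A -> independent (A \o g).
Proof.
move=> g_inj indA w; apply: positive_mono (indA [set g i | i in w]) => t hA i.
by rewrite -(mem_imset _ _ g_inj); apply: hA.
Qed.

End Cells.

Lemma pigeonhole_fiber k (bound : 'I_k -> nat) N (label : 'I_N -> 'I_k) :
  \sum_(l < k) bound l < N ->
  exists l (g : 'I_(bound l) -> 'I_N), injective g /\ forall i, label (g i) = l.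
Proof.
move=> bound_lt.
have [l big_fiber] : exists l, bound l <= #|[set j | label j == l]|.
  apply: NNPP => small; move: bound_lt; apply/negP; rewrite -leqNgt.
  have small_fiber l : #|[set j | label j == l]| < bound l.
    by rewrite ltnNge; apply/negP => le; apply: small; exists l.
  rewrite -{1}(card_ord N) -sum1_card (partition_big label predT) //=.
  apply: leq_sum => l _; apply: leq_trans (ltnW (small_fiber l)).
  by rewrite -sum1_card; apply: eq_leq; apply: eq_bigl => j; rewrite inE.
pose fiber := [set j | label j == l].
exists l, (fun i => enum_val (A := fiber) (widen_ord big_fiber i)); split.
- by move=> i j /enum_val_inj /(congr1 val) /= /val_inj.
- by move=> i; have := enum_valP (A := fiber) (widen_ord big_fiber i); rewrite inE => /eqP.
Qed.

Lemma dependent_good_partition (L : signature) (M : structure L)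
  (hne : inhabited (dom M)) (hdep : dependent M)
  (Z : Type) (nstar : nat) (len : 'I_nstar -> nat)
  (phi : forall n : 'I_nstar, formula L (Z + 'I_(len n)))
  (I : Type) (D : (I -> Prop) -> Prop) (hD : proper_filter D) (a : I -> Z -> M) :
  good_partition D (fun (x : {l : 'I_nstar & 'I_(len l) -> M}) t =>
                      sat (phi (tag x)) (join (a t) (tagged x))).
Proof.
apply: NNPP => nogood.
have /fin_all_exists [bound no_pattern] := fun l => dependent_ip_bound hne hdep (phi l).
have [A indA] := independent_of_no_good_partition hD nogood (\sum_(l < nstar) bound l).+1.
have [l [g [g_inj g_label]]] := pigeonhole_fiber (fun j => tag (A j)) (ltnSn _).
have indAg := independent_restrict g_inj indA.
have /fin_all_exists [b Ab] : forall i, exists bi, A (g i) = existT _ l bi.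
  by move=> i; move: (g_label i); case: (A (g i)) => l' b' /= eq_l; subst l'; exists b'.
have /fin_all_exists [pt pt_cell] := fun w => positive_nonempty hD (indAg w).
apply: (no_pattern l b (fun w => a (pt w))) => i w.
by rewrite (pt_cell w i) /= Ab.
Qed.

Theorem claim8p1 (L : signature) (M : structure L) (hne : inhabited (dom M)) (hdep : dependent M)
  (Z : Type) (nstar : nat) (len : 'I_nstar -> nat)
  (phi : forall n : 'I_nstar, formula L (Z + 'I_(len n)))
  (I : Type) (D : (I -> Prop) -> Prop) (hD : proper_filter D)
  (a : I -> Z -> M) :
  exists (kstar : nat) (S : 'I_kstar -> I -> Prop),
    is_partition S /\
    (forall k, positive D (S k)) /\
    (forall (l : 'I_nstar) (b : 'I_(len l) -> M),
       exists (k : 'I_kstar) (tv : bool),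
         eq_mod D
           (fun t => S k t /\
              (if tv then sat (phi l) (join (a t) b)
               else ~ sat (phi l) (join (a t) b)))
           (S k)).
Proof.
have [kstar [S [partS posS decS]]] := dependent_good_partition hne hdep phi hD a.
exists kstar, S; split=> //; split=> // l b.
exact: decS (existT _ l b).
Qed.
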